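(* Let $H=\ell^2(\mathbb{N})$ with its standard orthonormal basis, $K(H)$ the compact operators on $H$ represented by infinite matrices, and let $A=(a_{ij})\in\ell^\infty(\mathbb{N}^2)$ be such that $S_A(T)=A\circ T$ is a nonzero map $S_A\colon K(H)\to K(H)$. Then $S_A$ is multiplicative (i.e. $S_A(BC)=S_A(B)S_A(C)$ for all $B,C\in K(H)$) if and only if every column of $A$ is a scalar multiple of the first column of $A$ and $a_{ii}=1$ for all $i$.
   Context: $A\circ T$ is the entrywise product of $A$ with the matrix of $T$; $\ell^\infty(\mathbb{N}^2)$ denotes infinite matrices with uniformly bounded entries. *)

From Stdlib Require Import Reals.
From Coquelicot Require Import Coquelicot.
Open Scope R_scope.

(* Infinite matrices indexed by nat x nat (standard basis of l^2(N), index 0 first). *)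
Definition mat := nat -> nat -> C.

Definition ex_cseries (a : nat -> C) : Prop :=
  ex_series (fun n => fst (a n)) /\ ex_series (fun n => snd (a n)).
Definition CSeries (a : nat -> C) : C :=
  (Series (fun n => fst (a n)), Series (fun n => snd (a n))).

Definition l2 (x : nat -> C) : Prop := ex_series (fun i => (Cmod (x i)) ^ 2).
Definition l2norm (x : nat -> C) : R := sqrt (Series (fun i => (Cmod (x i)) ^ 2)).

Definition op_bounded_by (T : mat) (M : R) : Prop :=
  forall x : nat -> C, l2 x ->
    (forall i, ex_cseries (fun j => Cmult (T i j) (x j))) /\
    l2 (fun i => CSeries (fun j => Cmult (T i j) (x j))) /\
    l2norm (fun i => CSeries (fun j => Cmult (T i j) (x j))) <= M * l2norm x.

Definition fin_supp (F : mat) : Prop :=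
  exists n : nat, forall i j, (n <= i)%nat \/ (n <= j)%nat -> F i j = RtoC 0.

(* K(H): compact operators, as the operator-norm closure of the finite matrices
   (= closure of the finite-rank operators on l^2(N)). *)
Definition compact_mat (T : mat) : Prop :=
  forall eps : R, 0 < eps ->
    exists F : mat, fin_supp F /\ op_bounded_by (fun i j => Cminus (T i j) (F i j)) eps.

Definition matmul (B C : mat) : mat := fun i k => CSeries (fun j => Cmult (B i j) (C j k)).

Definition schur (A T : mat) : mat := fun i j => Cmult (A i j) (T i j).

Definition linfty (A : mat) : Prop := exists M : R, forall i j, Cmod (A i j) <= M.

From Stdlib Require Import Reals Lia FunctionalExtensionality.
From Coquelicot Require Import Coquelicot.
Open Scope R_scope.

(* The multiplicativity of [S_A] is equivalent to the cocycle identity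
   [a_ik = a_ij a_jk].  Testing [S_A] on matrix units [E_ab E_bc = E_ac] gives
   the identity; conversely, if it holds then
   [(S_A(B) S_A(C))_ik = sum_j a_ij a_jk b_ij c_jk = a_ik (BC)_ik], the series
   converging because rows and columns of compact matrices are square summable.
   Finally, a nonzero entry [a_ij] forces [a_ik <> 0] for all [k], hence
   [a_kk = 1], and the cocycle identity with middle index [0] says that the
   columns are multiples of the first one. *)

Lemma sum_n_single (a : nat -> R) (j n : nat) :
  (forall l, l <> j -> a l = 0) -> sum_n a n = if (n <? j)%nat then 0 else a j.
Proof.
  intros Ha. induction n as [|n IH].
  - rewrite sum_O. destruct j; [reflexivity | apply Ha; lia].
  - rewrite sum_Sn, IH. unfold plus; simpl.
    destruct (Nat.ltb_spec n j), (Nat.ltb_spec (S n) j); try lia.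
    + rewrite Ha by lia. ring.
    + replace j with (S n) by lia. ring.
    + rewrite (Ha (S n)) by lia. ring.
Qed.

Lemma is_series_single (a : nat -> R) (j : nat) :
  (forall l, l <> j -> a l = 0) -> is_series a (a j).
Proof.
  intros Ha. apply (filterlim_ext_loc (fun _ => a j)); [|apply filterlim_const].
  exists j. intros n Hn. pose proof (sum_n_single a j n Ha) as Hsum.
  destruct (Nat.ltb_spec n j); [lia | symmetry; exact Hsum].
Qed.

Lemma ex_series_single (a : nat -> R) (j : nat) :
  (forall l, l <> j -> a l = 0) -> ex_series a.
Proof. intros Ha. exists (a j). exact (is_series_single a j Ha). Qed.

Lemma ex_cseries_single (a : nat -> C) (j : nat) :
  (forall l, l <> j -> a l = RtoC 0) -> ex_cseries a.
Proof.
  intros Ha. split; apply (ex_series_single _ j); intros l Hl; rewrite Ha; auto.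
Qed.

Lemma CSeries_single (a : nat -> C) (j : nat) :
  (forall l, l <> j -> a l = RtoC 0) -> CSeries a = a j.
Proof.
  intros Ha. apply injective_projections;
    apply is_series_unique, (is_series_single (fun n => _ (a n)) j);
    intros l Hl; rewrite Ha; auto.
Qed.

Lemma CSeries_scal (c : C) (a : nat -> C) :
  ex_cseries a -> CSeries (fun j => Cmult c (a j)) = Cmult c (CSeries a).
Proof.
  intros [Hre Him]. unfold CSeries, Cmult.
  pose proof (ex_series_scal_l (fst c) _ Hre).
  pose proof (ex_series_scal_l (fst c) _ Him).
  pose proof (ex_series_scal_l (snd c) _ Hre).
  pose proof (ex_series_scal_l (snd c) _ Him).
  apply injective_projections; simpl.
  - rewrite (Series_minus (fun n => fst c * fst (a n)) (fun n => snd c * snd (a n)))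
      by assumption.
    rewrite !Series_scal_l. reflexivity.
  - rewrite (Series_plus (fun n => fst c * snd (a n)) (fun n => snd c * fst (a n)))
      by assumption.
    rewrite !Series_scal_l. reflexivity.
Qed.

Lemma ex_series_eventually_eq (a b : nat -> R) (n : nat) :
  (forall j, (n <= j)%nat -> a j = b j) -> ex_series a -> ex_series b.
Proof.
  intros Hab Ha. apply (ex_series_incr_n b n).
  apply (ex_series_incr_n a n) in Ha.
  revert Ha. apply ex_series_ext. intros k. apply Hab. lia.
Qed.

Lemma op_bounded_by_zero (M : R) : 0 <= M -> op_bounded_by (fun _ _ => RtoC 0) M.
Proof.
  intros HM x _.
  assert (Hrow : CSeries (fun j => Cmult (RtoC 0) (x j)) = RtoC 0).
  { rewrite (CSeries_single _ 0%nat); intros; apply Cmult_0_l. }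
  assert (Hsq : Cmod (CSeries (fun j => Cmult (RtoC 0) (x j))) ^ 2 = 0).
  { rewrite Hrow, Cmod_0. ring. }
  split; [|split].
  - intros i. apply (ex_cseries_single _ 0%nat). intros; apply Cmult_0_l.
  - apply (ex_series_single _ 0%nat). intros; exact Hsq.
  - unfold l2norm. rewrite (Series_ext _ (fun _ => 0)) by (intros; exact Hsq).
    rewrite (is_series_unique _ 0) by (apply (is_series_single (fun _ => 0) 0%nat); auto).
    rewrite sqrt_0. apply Rmult_le_pos; [exact HM | apply sqrt_pos].
Qed.

Lemma fin_supp_compact (F : mat) : fin_supp F -> compact_mat F.
Proof.
  intros HF eps Heps. exists F. split; [exact HF|].
  replace (fun i j => Cminus (F i j) (F i j)) with (fun _ _ : nat => RtoC 0).
  - apply op_bounded_by_zero. now apply Rlt_le.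
  - do 2 (apply functional_extensionality; intros). ring.
Qed.

Lemma compact_mat_eventually_bounded (T : mat) : compact_mat T ->
  exists G n, op_bounded_by G 1 /\
    forall i j, (n <= i \/ n <= j)%nat -> T i j = G i j.
Proof.
  intros HT. destruct (HT 1 Rlt_0_1) as [F [[n HF] HG]].
  exists (fun i j => Cminus (T i j) (F i j)), n. split; [exact HG|].
  intros i j Hij. rewrite HF by exact Hij. ring.
Qed.

Definition basis_vec (k : nat) : nat -> C :=
  fun j => if Nat.eqb j k then RtoC 1 else RtoC 0.

Lemma basis_vec_neq (k l : nat) : l <> k -> basis_vec k l = RtoC 0.
Proof. intros Hl. unfold basis_vec. now destruct (Nat.eqb_spec l k). Qed.

Lemma l2_basis_vec (k : nat) : l2 (basis_vec k).
Proof.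
  apply (ex_series_single _ k). intros l Hl. rewrite basis_vec_neq, Cmod_0 by exact Hl.
  ring.
Qed.

Lemma compact_mat_col_l2 (T : mat) (k : nat) : compact_mat T -> l2 (fun i => T i k).
Proof.
  intros HT. destruct (compact_mat_eventually_bounded T HT) as [G [n [HG HTG]]].
  destruct (HG (basis_vec k) (l2_basis_vec k)) as [_ [HGk _]].
  assert (Hcol : forall i, CSeries (fun j => Cmult (G i j) (basis_vec k j)) = G i k).
  { intros i. rewrite (CSeries_single _ k).
    - unfold basis_vec. rewrite Nat.eqb_refl. apply Cmult_1_r.
    - intros l Hl. rewrite basis_vec_neq by exact Hl. apply Cmult_0_r. }
  apply (ex_series_eventually_eq (fun i => Cmod (G i k) ^ 2) _ n).
  - intros i Hi. rewrite HTG by (left; exact Hi). reflexivity.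
  - revert HGk. apply ex_series_ext. intros i. now rewrite Hcol.
Qed.

Lemma compact_mat_row_ex_cseries (T : mat) (i : nat) (x : nat -> C) :
  compact_mat T -> l2 x -> ex_cseries (fun j => Cmult (T i j) (x j)).
Proof.
  intros HT Hx. destruct (compact_mat_eventually_bounded T HT) as [G [n [HG HTG]]].
  destruct (HG x Hx) as [HGx _]. destruct (HGx i) as [Hre Him].
  split; [revert Hre | revert Him]; apply ex_series_eventually_eq with n;
    intros j Hj; rewrite HTG by (right; exact Hj); reflexivity.
Qed.

Lemma matmul_ex_cseries (B C : mat) (i k : nat) :
  compact_mat B -> compact_mat C -> ex_cseries (fun j => Cmult (B i j) (C j k)).
Proof.
  intros HB HC. apply compact_mat_row_ex_cseries; [exact HB|].
  now apply compact_mat_col_l2.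
Qed.

Lemma matmul_row_single (B C : mat) (i b k : nat) :
  (forall l, l <> b -> B i l = RtoC 0) -> matmul B C i k = Cmult (B i b) (C b k).
Proof.
  intros HB. apply (CSeries_single (fun j => Cmult (B i j) (C j k)) b). intros l Hl. rewrite HB by exact Hl.
  apply Cmult_0_l.
Qed.

Definition mat_unit (a b : nat) : mat :=
  fun i j => if andb (Nat.eqb i a) (Nat.eqb j b) then RtoC 1 else RtoC 0.

Lemma mat_unit_diag (a b : nat) : mat_unit a b a b = RtoC 1.
Proof. unfold mat_unit. now rewrite !Nat.eqb_refl. Qed.

Lemma mat_unit_neq (a b i l : nat) : l <> b -> mat_unit a b i l = RtoC 0.
Proof.
  intros Hl. unfold mat_unit. destruct (Nat.eqb_spec l b); [contradiction|].
  now rewrite Bool.andb_false_r.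
Qed.

Lemma mat_unit_compact (a b : nat) : compact_mat (mat_unit a b).
Proof.
  apply fin_supp_compact. exists (S (max a b)). intros i j Hij. unfold mat_unit.
  destruct (Nat.eqb_spec i a), (Nat.eqb_spec j b); simpl; auto; lia.
Qed.

Definition schur_cocycle (A : mat) : Prop :=
  forall i j k, A i k = Cmult (A i j) (A j k).

Lemma schur_multiplicative_cocycle (A : mat) :
  (forall B C, compact_mat B -> compact_mat C ->
     schur A (matmul B C) = matmul (schur A B) (schur A C)) ->
  schur_cocycle A.
Proof.
  intros Hmult a b c.
  pose proof (f_equal (fun M => M a c)
    (Hmult _ _ (mat_unit_compact a b) (mat_unit_compact b c))) as E; simpl in E.
  unfold schur at 1 in E.
  rewrite (matmul_row_single _ _ a b c) in E by (intros; apply mat_unit_neq; auto).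
  rewrite (matmul_row_single _ _ a b c) in E
    by (intros; unfold schur; rewrite mat_unit_neq by auto; apply Cmult_0_r).
  unfold schur in E. rewrite !mat_unit_diag, !Cmult_1_r in E. exact E.
Qed.

Lemma cocycle_schur_multiplicative (A B C : mat) :
  schur_cocycle A -> compact_mat B -> compact_mat C ->
  schur A (matmul B C) = matmul (schur A B) (schur A C).
Proof.
  intros HA HB HC. apply functional_extensionality; intros i.
  apply functional_extensionality; intros k. unfold schur, matmul.
  rewrite <- CSeries_scal by (now apply matmul_ex_cseries).
  f_equal. apply functional_extensionality; intros j. rewrite (HA i j k). ring.
Qed.

Lemma cocycle_diag_one (A : mat) (i j : nat) :
  schur_cocycle A -> A i j <> RtoC 0 -> forall k, A k k = RtoC 1.
Proof.
  intros HA Hij k.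
  assert (Hik : A i k <> RtoC 0).
  { intros E. apply Hij. rewrite (HA i k j), E. apply Cmult_0_l. }
  assert (E : A k k = Cmult (Cinv (A i k)) (Cmult (A i k) (A k k))) by (field; exact Hik).
  rewrite E, <- (HA i k k). field. exact Hik.
Qed.

Lemma col_multiples_diag_one_cocycle (A : mat) (c : nat -> C) :
  (forall i j, A i j = Cmult (c j) (A i 0%nat)) -> (forall i, A i i = RtoC 1) ->
  schur_cocycle A.
Proof.
  intros Hc Hd i j k. specialize (Hd j). rewrite (Hc j j) in Hd.
  rewrite (Hc i k), (Hc i j), (Hc j k).
  transitivity (Cmult (Cmult (c j) (A j 0%nat)) (Cmult (c k) (A i 0%nat))).
  - rewrite Hd. ring.
  - ring.
Qed.

Theorem theorem4p3 (A : mat) :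
  linfty A ->
  (forall T : mat, compact_mat T -> compact_mat (schur A T)) ->
  (exists T : mat, compact_mat T /\ exists i j, schur A T i j <> RtoC 0) ->
  ((forall B C : mat, compact_mat B -> compact_mat C ->
      schur A (matmul B C) = matmul (schur A B) (schur A C))
   <->
   ((exists c : nat -> C, forall i j, A i j = Cmult (c j) (A i 0%nat)) /\
    (forall i, A i i = RtoC 1))).
Proof.
  intros _ _ [T [_ [i0 [j0 HT]]]].
  assert (Hnz : A i0 j0 <> RtoC 0).
  { intros E. apply HT. unfold schur. rewrite E. apply Cmult_0_l. }
  split.
  - intros Hmult. pose proof (schur_multiplicative_cocycle A Hmult) as HA.
    split.
    + exists (fun j => A 0%nat j). intros i j. rewrite (HA i 0%nat j). apply Cmult_comm.
    + exact (cocycle_diag_one A i0 j0 HA Hnz).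
  - intros [[c Hc] Hd] B C HB HC.
    exact (cocycle_schur_multiplicative A B C (col_multiples_diag_one_cocycle A c Hc Hd) HB HC).
Qed.
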